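(* Let $0\to N\xrightarrow{i} G\xrightarrow{p} Q\to 1$ be a short exact sequence of groups with $N$ abelian (written additively; $G$ need not be abelian). Let $Aut^Q_N(G)$ be the group (under composition) of automorphisms $\alpha$ of $G$ with $\alpha(N)\subseteq N$ and $p\circ\alpha=p$, let $Aut^{N,Q}(G)$ be its subgroup of those $\alpha$ with $\alpha|_N=\mathrm{id}_N$, and let $Aut_Q(N)$ be the group of $Q$-module automorphisms of $N$. Then the sequence $$1\to Aut^{N,Q}(G)\xrightarrow{i'} Aut^Q_N(G)\xrightarrow{\rho'} Aut_Q(N)\xrightarrow{\eta} H^2(Q,N)$$ is exact, where $i'$ is the inclusion, $\rho'(\alpha)=\alpha|_N$, and $\eta$ is the restriction to $Aut_Q(N)$ of the transgression map $End_Q(N)\to H^2(Q,N)$ of the five-term exact sequence of the extension; here $i',\rho'$ are group homomorphisms and $\eta$ is a map of pointed sets (exactness at $Aut_Q(N)$ meaning $\mathrm{Im}\,\rho'=\eta^{-1}(0)$).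
   Context: $N$ is a $Q$-module via conjugation in $G$: for $\bar y=p(y)$, $\bar y\cdot n=y+n-y$. $H^2(Q,N)$ is group cohomology with this action. *)

From HB Require Import structures.
From mathcomp Require Import all_boot all_algebra.
From mathcomp Require Import monoid.

Set Implicit Arguments.
Unset Strict Implicit.
Unset Printing Implicit Defensive.

Section ExtensionDefs.
Variables (N : zmodType) (G Q : groupType) (i : N -> G) (p : G -> Q).

Definition short_exact : Prop :=
  [/\ (forall x y : N, i (x + y)%R = (i x * i y)%g),
      (forall g h : G, p (g * h)%g = (p g * p h)%g),
      injective i,
      (forall q : Q, exists g : G, p g = q)
    & (forall g : G, p g = 1%g <-> exists n : N, g = i n)].

Definition conj_action (act : Q -> N -> N) : Prop :=
  forall (y : G) (n : N), i (act (p y) n) = (y * i n * y^-1)%g.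

Definition group_aut (a : G -> G) : Prop :=
  bijective a /\ (forall x y : G, a (x * y)%g = (a x * a y)%g).

Definition AutQN (a : G -> G) : Prop :=
  [/\ group_aut a, (forall n : N, exists m : N, a (i n) = i m)
    & (forall g : G, p (a g) = p g)].

Definition AutNQ (a : G -> G) : Prop :=
  AutQN a /\ (forall n : N, a (i n) = i n).

Definition restricts_to (a : G -> G) (phi : N -> N) : Prop :=
  forall n : N, a (i n) = i (phi n).

Definition AutQmod (act : Q -> N -> N) (phi : N -> N) : Prop :=
  [/\ bijective phi, (forall x y : N, phi (x + y)%R = (phi x + phi y)%R)
    & (forall (q : Q) (n : N), phi (act q n) = act q (phi n))].

Definition section (s : Q -> G) : Prop := forall q : Q, p (s q) = q.

Definition factor_set (s : Q -> G) (f : Q -> Q -> N) : Prop :=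
  forall x y : Q, i (f x y) = (s x * s y * (s (x * y))^-1)%g.

End ExtensionDefs.

(* inhomogeneous 2-coboundaries: h = delta c, (delta c)(x,y) = x.c(y) - c(xy) + c(x);
   a 2-cocycle represents 0 in H^2(Q,N) iff it is a coboundary *)
Definition is_coboundary (N : zmodType) (Q : groupType) (act : Q -> N -> N)
  (h : Q -> Q -> N) : Prop :=
  exists c : Q -> N, forall x y : Q,
    h x y = (act x (c y) - c (x * y)%g + c x)%R.

(* eta(phi) = phi_*[f] - [f], represented by the cocycle (phi o f - f) *)
Definition eta_cocycle (N : zmodType) (Q : groupType) (f : Q -> Q -> N)
  (phi : N -> N) : Q -> Q -> N :=
  fun x y => (phi (f x y) - f x y)%R.

Definition eta_zero (N : zmodType) (Q : groupType) (act : Q -> N -> N)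
  (f : Q -> Q -> N) (phi : N -> N) : Prop :=
  is_coboundary act (eta_cocycle f phi).

From HB Require Import structures.
From mathcomp Require Import all_boot all_algebra.
From mathcomp Require Import monoid.

Set Implicit Arguments.
Unset Strict Implicit.
Unset Printing Implicit Defensive.
Import GRing.Theory.

(* The section s gives normal forms: every g in G is uniquely i n * s q with
   q = p g, and in these coordinates the product reads
   (i n * s x) (i m * s y) = i (n + x.m + f x y) * s (x y).
   An automorphism a in Aut^Q_N(G) is determined by phi = a|_N and by the
   cochain c with a (s q) = i (c q) * s q; multiplicativity of a on
   s x * s y = i (f x y) * s (x y) says exactly that phi o f - f = delta c.
   Conversely, given phi in Aut_Q(N) and such a c, the map
   i n * s q |-> i (phi n + c q) * s q is an automorphism of G in Aut^Q_N(G)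
   restricting to phi.  The other exactness claims are formal. *)

Section GroupMorphism.
Variables (G H : groupType) (h : G -> H).
Hypothesis hM : forall x y : G, h (x * y)%g = (h x * h y)%g.

Lemma gmorph1 : h 1%g = 1%g.
Proof. by apply: (@mulgI _ (h 1%g)); rewrite -hM !mulg1. Qed.

Lemma gmorphV (x : G) : h x^-1%g = (h x)^-1%g.
Proof. by symmetry; apply: mulg1_eq; rewrite -hM mulgV gmorph1. Qed.

End GroupMorphism.

Lemma addf_sub (U V : zmodType) (h : U -> V) :
  {morph h : u v / (u + v)%R} -> {morph h : u v / (u - v)%R}.
Proof. by move=> hD u v; apply/eqP; rewrite eq_sym subr_eq -hD subrK. Qed.

Section Extension.
Local Open Scope ring_scope.
Local Open Scope group_scope.

Variables (N : zmodType) (G Q : groupType) (i : N -> G) (p : G -> Q).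
Variables (act : Q -> N -> N) (s : Q -> G) (f : Q -> Q -> N).

Hypotheses (iD : forall x y : N, i (x + y) = i x * i y)
           (pM : forall g h : G, p (g * h) = p g * p h)
           (i_inj : injective i) (p_surj : forall q : Q, exists g : G, p g = q)
           (ker_p : forall g : G, p g = 1 <-> exists n : N, g = i n).
Hypotheses (actE : conj_action i p act) (sK : section p s)
           (fE : factor_set i s f).

Lemma p_i (n : N) : p (i n) = 1.
Proof. by apply/ker_p; exists n. Qed.

Lemma p_i_s (n : N) (q : Q) : p (i n * s q) = q.
Proof. by rewrite pM p_i sK mul1g. Qed.

Lemma act_add (q : Q) : {morph act q : u v / u + v}.
Proof.
move=> u v; have [y <-] := p_surj q; apply: i_inj.
by rewrite [RHS]iD !actE iD !mulgA mulgVK.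
Qed.

Lemma act1 (n : N) : act 1 n = n.
Proof. by apply: i_inj; rewrite -(gmorph1 pM) actE invg1 mulg1 mul1g. Qed.

Lemma s_i_comm (x : Q) (m : N) : s x * i m = i (act x m) * s x.
Proof. by rewrite -{2}[x]sK actE mulgVK. Qed.

Lemma s_mul (x y : Q) : s x * s y = i (f x y) * s (x * y).
Proof. by rewrite fE mulgVK. Qed.

Lemma mul_i_s (n m : N) (x y : Q) :
  i n * s x * (i m * s y) = i (n + act x m + f x y) * s (x * y).
Proof.
rewrite !iD -!mulgA; congr (_ * _).
by rewrite [LHS]mulgA s_i_comm -mulgA s_mul.
Qed.

Lemma coord_subproof (g : G) : exists n : N, i n == g * (s (p g))^-1.
Proof.
have [n ->] : exists n, g * (s (p g))^-1 = i n.
  by apply/ker_p; rewrite pM (gmorphV pM) sK mulgV.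
by exists n.
Qed.

Definition coord (g : G) : N := xchoose (coord_subproof g).

Lemma coordK (g : G) : i (coord g) * s (p g) = g.
Proof. by rewrite (eqP (xchooseP (coord_subproof g))) mulgVK. Qed.

Lemma coord_i_s (n : N) (q : Q) : coord (i n * s q) = n.
Proof. by apply: i_inj; apply: (@mulIg _ (s q)); rewrite -{2}(p_i_s n q) coordK. Qed.

Lemma restriction_exists (a : G -> G) :
  (forall n : N, exists m : N, a (i n) = i m) -> exists phi, restricts_to i a phi.
Proof.
move=> aN; have aN' n : exists m, a (i n) == i m.
  by have [m ->] := aN n; exists m.
by exists (fun n => xchoose (aN' n)) => n; apply/eqP/(xchooseP (aN' n)).
Qed.

Lemma restriction_AutQmod (a : G -> G) (phi : N -> N) :
  AutQN i p a -> restricts_to i a phi -> AutQmod act phi.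
Proof.
move=> [[[b aK bK] aM] _ ap] aphi.
have [psi bpsi] : exists psi, restricts_to i b psi.
  apply: restriction_exists => m; apply/ker_p.
  by rewrite -ap bK p_i.
split.
- by exists psi => n; apply: i_inj; [rewrite -bpsi -aphi aK | rewrite -aphi -bpsi bK].
- by move=> x y; apply: i_inj; rewrite -aphi !iD aM !aphi.
- move=> q n; have [y <-] := p_surj q; apply: i_inj.
  by rewrite -aphi actE !aM (gmorphV aM) aphi -ap -actE.
Qed.

Lemma restriction_eta_zero (a : G -> G) (phi : N -> N) :
  AutQN i p a -> restricts_to i a phi -> eta_zero act f phi.
Proof.
move=> [[_ aM] _ ap] aphi.
pose c q := coord (a (s q)).
have a_s q : a (s q) = i (c q) * s q by rewrite -{1}(coordK (a (s q))) ap sK.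
exists c => x y.
have := f_equal a (s_mul x y).
rewrite !aM !a_s aphi mul_i_s mulgA -iD => /mulIg/i_inj E.
rewrite /eta_cocycle -[phi _](addrK (c (x * y))) -E.
by rewrite addrAC addrK -addrA addrC.
Qed.

Section Twist.
Variables (phi : N -> N) (c : Q -> N).
Hypotheses (phiA : AutQmod act phi)
           (phi_f : forall x y, eta_cocycle f phi x y = act x (c y) - c (x * y) + c x).

Lemma phi_factor_set (x y : Q) : phi (f x y) + c (x * y) = c x + act x (c y) + f x y.
Proof.
have := phi_f x y; rewrite /eta_cocycle => /eqP; rewrite subr_eq => /eqP ->.
by rewrite (addrAC (act x _)) (addrAC _ (- _)) subrK (addrC (act x _)).
Qed.

Definition twist (g : G) : G := i (phi (coord g) + c (p g)) * s (p g).

Lemma twist_i_s (n : N) (q : Q) : twist (i n * s q) = i (phi n + c q) * s q.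
Proof. by rewrite /twist coord_i_s p_i_s. Qed.

Lemma twist_morph (g h : G) : twist (g * h) = twist g * twist h.
Proof.
have [_ phiD phi_act] := phiA.
rewrite -(coordK g) -(coordK h) mul_i_s !twist_i_s mul_i_s; congr (i _ * _).
rewrite !phiD phi_act act_add -addrA phi_factor_set -!addrA.
by congr (_ + _); rewrite addrCA.
Qed.

Lemma twist_restricts : restricts_to i twist phi.
Proof.
move=> n.
have s1 : s 1 = i (f 1 1) by rewrite fE mulg1 mulgK.
have f11 : phi (f 1 1) = c 1 + f 1 1.
  have := phi_factor_set 1 1; rewrite mulg1 act1 => /(canRL (addrK _)) ->.
  by rewrite addrAC addrK.
rewrite (_ : i n = i (n - f 1 1) * s 1); last by rewrite s1 -iD subrK.
have [_ phiD _] := phiA.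
by rewrite twist_i_s (addf_sub phiD) f11 s1 -iD opprD addrA (addrAC _ (- _)) !subrK.
Qed.

Lemma twist_bijective : bijective twist.
Proof.
have [[phiV phiK phiVK] _ _] := phiA.
exists (fun g => i (phiV (coord g - c (p g))) * s (p g)) => g.
- by rewrite /twist coord_i_s p_i_s addrK phiK coordK.
- by rewrite twist_i_s phiVK subrK coordK.
Qed.

Lemma twist_AutQN : AutQN i p twist.
Proof.
split; first by split; [exact: twist_bijective | exact: twist_morph].
- by move=> n; exists (phi n); apply: twist_restricts.
- by move=> g; rewrite /twist p_i_s.
Qed.

End Twist.

Lemma eta_zero_restriction (phi : N -> N) :
  AutQmod act phi -> eta_zero act f phi ->
  exists a : G -> G, AutQN i p a /\ restricts_to i a phi.
Proof.
move=> phiA [c phi_f]; exists (twist phi c).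
by split; [exact: twist_AutQN | exact: twist_restricts].
Qed.

End Extension.

Theorem corollary2 (N : zmodType) (G Q : groupType) (i : N -> G) (p : G -> Q)
  (act : Q -> N -> N) (s : Q -> G) (f : Q -> Q -> N) :
  short_exact i p -> conj_action i p act -> section p s -> factor_set i s f ->
  [/\ (* i' : Aut^{N,Q}(G) -> Aut^Q_N(G) is the inclusion (injective) *)
      (forall a : G -> G, AutNQ i p a -> AutQN i p a),
      (* rho' is well defined: a|_N is a Q-module automorphism of N *)
      (forall a : G -> G, AutQN i p a ->
         exists phi : N -> N, restricts_to i a phi /\ AutQmod act phi),
      (* rho' is a homomorphism *)
      (forall (a b : G -> G) (phi psi : N -> N),
         AutQN i p a -> AutQN i p b -> restricts_to i a phi ->
         restricts_to i b psi -> restricts_to i (a \o b) (phi \o psi)),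
      (* exactness at Aut^Q_N(G): ker rho' = Im i' *)
      (forall a : G -> G, AutQN i p a ->
         (restricts_to i a id <-> AutNQ i p a))
    & (* exactness at Aut_Q(N): Im rho' = eta^{-1}(0) *)
      (forall phi : N -> N, AutQmod act phi ->
         ((exists a : G -> G, AutQN i p a /\ restricts_to i a phi)
          <-> eta_zero act f phi))].
Proof.
move=> [iD pM i_inj p_surj ker_p] actE sK fE; split.
- by move=> a [].
- move=> a aQN; have [_ aN _] := aQN.
  have [phi aphi] := restriction_exists aN.
  by exists phi; split => //; apply: restriction_AutQmod aQN aphi.
- by move=> a b phi psi _ _ aphi bpsi n /=; rewrite bpsi aphi.
- move=> a aQN; split => [a_id | [_ a_id] n]; last by rewrite a_id.
  by split => // n; rewrite a_id.
- move=> phi phiA; split => [[a [aQN aphi]] | ].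
  + by apply: restriction_eta_zero aQN aphi.
  + by apply: eta_zero_restriction.
Qed.
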